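(* Let $Q$ be a topological $k$-quandle, let ${}^v_v\sigma$ be a $k$-colored $n$-braid whose top and bottom color tuples are both $v\in\{1,\dots,k\}^n$, let $L_C=\overline{{}^v_v\sigma}$ be its closure and $D_C$ the closed-braid diagram of $L_C$. Then $\mathrm{Hom}(F(D_C),Q)$ is homeomorphic to $\hat{J}_Q(L_C)$, the space of fixed points of the map ${}^v_v\sigma:Q^n\to Q^n$; explicitly, the map $f\mapsto (f(y_1),\dots,f(y_n))$, where $y_1,\dots,y_n$ are the arcs at the top ends of the braid from left to right, is a homeomorphism $\mathrm{Hom}(F(D_C),Q)\to\hat{J}_Q(L_C)$.
   Context: A quandle is a set with a binary operation $\triangleright$ such that $x\triangleright x=x$, each right translation $x\mapsto x\triangleright y$ is a bijection (inverse written $x\mapsto x\triangleright^{-1}y$), and $(x\triangleright y)\triangleright z=(x\triangleright z)\triangleright(y\triangleright z)$. A $k$-quandle is a set with operations $\triangleright_1,\dots,\triangleright_k$, each making it a quandle, with $(x\triangleright_i y)\triangleright_j z=(x\triangleright_j z)\triangleright_i(y\triangleright_j z)$ for all $i,j,x,y,z$. A topological $k$-quandle is a $k$-quandle with a topology making all $\triangleright_i,\triangleright_i^{-1}:Q\times Q\to Q$ continuous. A $k$-colored $n$-braid is an $n$-strand braid (oriented top to bottom) with each strand colored by one of $1,\dots,k$, all colors used; ${}^v_w\sigma$ denotes such a braid with colors $v$ at the top and $w$ at the bottom (read left to right). For $v=(v_1,\dots,v_n)$ and $w$ obtained from $v$ by swapping entries $i,i+1$, the elementary colored braid ${}^v_w\sigma_i$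 (strand $i$ crossing strand $i+1$ positively) induces the homeomorphism $Q^n\to Q^n$ given by $x\mapsto x'$ with $x'_j=x_j$ for $j\ne i,i+1$, $x'_i=x_{i+1}$, $x'_{i+1}=x_i\triangleright_{v_{i+1}}x_{i+1}$; the inverse elementary braid ${}^w_v\sigma_i^{-1}$ induces the inverse homeomorphism. Every colored braid is a product ${}^{v^1}_{v^2}\sigma_{i_1}^{\pm}\cdots{}^{v^m}_{v^{m+1}}\sigma_{i_m}^{\pm}$ of elementary colored braids, and it induces the composite map ${}^{v^m}_{v^{m+1}}\sigma_{i_m}^{\pm}\circ\cdots\circ{}^{v^1}_{v^2}\sigma_{i_1}^{\pm}$. The closure of ${}^v_v\sigma$ joins each top end to the bottom end in the same position, giving a $k$-colored link (oriented link with components colored, considered up to orientation- and color-preserving isotopy). For a diagram $D_C$ with arcs $x_1,\dots,x_N$, $F(D_C)$ is the $k$-quandle generated by the arcs modulo crossing relations: at a crossing with over-arc $y$, incoming under-arc $x$, outgoing under-arc $z$, over-strand color $j$, $z=x\triangleright_j y$ (positive) or $z=x\triangleright_j^{-1}y$ (negative). $\mathrm{Hom}(F(D_C),Q)$ is the set of $k$-quandle homomorphisms $F(D_C)\to Q$, with $F(D_C)$ discrete and $\mathrm{Hom}$ given the compact-open topology; $\hat{J}_Q(L_C)\subseteq Q^n$ has the subspace topology. *)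

From HB Require Import structures.
From mathcomp Require Import all_boot all_order.
From mathcomp Require Import boolp classical_sets functions.
From mathcomp Require Import topology.

Set Implicit Arguments.
Unset Strict Implicit.
Unset Printing Implicit Defensive.

Local Open Scope classical_set_scope.

(** * Topological k-quandles.  Colours 1..k are represented by 'I_k.   *)

Definition is_kquandle (k : nat) (Q : Type)
    (op opinv : 'I_k -> Q -> Q -> Q) : Prop :=
  [/\ (forall i x, op i x x = x),
      (forall i x y, opinv i (op i x y) y = x),
      (forall i x y, op i (opinv i x y) y = x) &
      (forall i j x y z, op j (op i x y) z = op i (op j x z) (op j y z))].

Definition is_topological_kquandle (k : nat) (Q : topologicalType)
    (op opinv : 'I_k -> Q -> Q -> Q) : Prop :=
  is_kquandle op opinv /\
  forall i : 'I_k,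
    continuous (fun p : Q * Q => op i p.1 p.2) /\
    continuous (fun p : Q * Q => opinv i p.1 p.2).

Definition is_khom (k : nat) (F Q : Type)
    (opF : 'I_k -> F -> F -> F) (opQ : 'I_k -> Q -> Q -> Q) (f : F -> Q) : Prop :=
  forall i a b, f (opF i a b) = opQ i (f a) (f b).

Inductive eqclos (T : Type) (R : T -> T -> Prop) : T -> T -> Prop :=
| eqclos_step a b : R a b -> eqclos R a b
| eqclos_refl a : eqclos R a a
| eqclos_sym a b : eqclos R a b -> eqclos R b a
| eqclos_trans a b c : eqclos R a b -> eqclos R b c -> eqclos R a c.

Definition cquot (T : Type) (E : T -> T -> Prop) : Type :=
  {A : set T | exists t, A = E t}.

HB.instance Definition _ (T : Type) (E : T -> T -> Prop) :=
  gen_eqMixin (cquot E).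
HB.instance Definition _ (T : Type) (E : T -> T -> Prop) :=
  gen_choiceMixin (cquot E).

Definition cclass (T : Type) (E : T -> T -> Prop) (t : T) : cquot E :=
  exist _ (E t) (ex_intro _ t erefl).

Definition crepr (T : Type) (E : T -> T -> Prop) (A : cquot E) : T :=
  proj1_sig (cid (proj2_sig A)).

Inductive kterm (k : nat) (G : Type) : Type :=
| KGen of G
| KOp of 'I_k & kterm k G & kterm k G
| KOpInv of 'I_k & kterm k G & kterm k G.

Arguments KGen {k G}.
Arguments KOp {k G}.
Arguments KOpInv {k G}.

Inductive kcong (k : nat) (G : Type) (R : kterm k G -> kterm k G -> Prop) :
    kterm k G -> kterm k G -> Prop :=
| kc_rel a b : R a b -> kcong R a b
| kc_refl a : kcong R a a
| kc_sym a b : kcong R a b -> kcong R b a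
| kc_trans a b c : kcong R a b -> kcong R b c -> kcong R a c
| kc_op i a a' b b' : kcong R a a' -> kcong R b b' ->
    kcong R (KOp i a b) (KOp i a' b')
| kc_opinv i a a' b b' : kcong R a a' -> kcong R b b' ->
    kcong R (KOpInv i a b) (KOpInv i a' b')
| kc_idem i a : kcong R (KOp i a a) a
| kc_inv1 i a b : kcong R (KOpInv i (KOp i a b) b) a
| kc_inv2 i a b : kcong R (KOp i (KOpInv i a b) b) a
| kc_dist i j a b c :
    kcong R (KOp j (KOp i a b) c) (KOp i (KOp j a c) (KOp j b c)).

Definition kpres (k : nat) (G : Type) (R : kterm k G -> kterm k G -> Prop) : Type :=
  cquot (kcong R).

Definition kpres_op (k : nat) (G : Type) (R : kterm k G -> kterm k G -> Prop)
    (i : 'I_k) (a b : kpres R) : kpres R :=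
  cclass (kcong R) (KOp i (crepr a) (crepr b)).

Definition kpres_gen (k : nat) (G : Type) (R : kterm k G -> kterm k G -> Prop)
    (g : G) : kpres R :=
  cclass (kcong R) (KGen g).

(** A braid word is a sequence of letters (i, s) : nat * bool, meaning
   sigma_i (0-based: strands at positions i and i+1, i.e. sigma_{i+1} in the
   paper's 1-based numbering) if s = true and sigma_i^{-1} if s = false. *)

Definition braid_letter := (nat * bool)%type.

Definition valid_word (n : nat) (w : seq braid_letter) : bool :=
  all (fun l => l.1.+1 < n) w.

Definition swapc (A : Type) (n : nat) (i : nat) (c : 'I_n -> A) : 'I_n -> A :=
  fun j => if val j == i then c (insubd j i.+1)
           else if val j == i.+1 then c (insubd j i) else c j.

Definition colors_at (k n : nat) (v : 'I_n -> 'I_k) (w : seq braid_letter)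
    (t : nat) : 'I_n -> 'I_k :=
  foldl (fun c l => swapc l.1 c) v (take t w).

Definition braid_step (k : nat) (Q : Type) (op opinv : 'I_k -> Q -> Q -> Q)
    (n : nat) (c : 'I_n -> 'I_k) (l : braid_letter) (x : 'I_n -> Q) : 'I_n -> Q :=
  fun j =>
    let i := l.1 in
    if l.2 then
      (if val j == i then x (insubd j i.+1)
       else if val j == i.+1 then op (c j) (x (insubd j i)) (x j)
       else x j)
    else
      (* inverse of the positive crossing with top colours swap(c):
         y'_i = y_{i+1} |>^{-1}_{c_i} y_i,  y'_{i+1} = y_i *)
      (if val j == i then opinv (c j) (x (insubd j i.+1)) (x j)
       else if val j == i.+1 then x (insubd j i)
       else x j).

Fixpoint braid_map (k : nat) (Q : Type) (op opinv : 'I_k -> Q -> Q -> Q)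
    (n : nat) (c : 'I_n -> 'I_k) (w : seq braid_letter) (x : 'I_n -> Q)
    : 'I_n -> Q :=
  match w with
  | [::] => x
  | l :: w' => braid_map op opinv (swapc l.1 c) w' (braid_step op opinv c l x)
  end.

Definition fixed_points (k : nat) (Q : Type) (op opinv : 'I_k -> Q -> Q -> Q)
    (n : nat) (v : 'I_n -> 'I_k) (w : seq braid_letter) : set ('I_n -> Q) :=
  [set x | braid_map op opinv v w x = x].

(** Segments: (t, j) is the piece of the strand at position j between the
   t-th and (t+1)-th crossing (level t, 0 <= t <= size w); level size w is
   joined to level 0 by the closure.  Arcs are the classes of segments under
   the equivalence generated by "continues without passing under". *)

Definition segment (n : nat) (w : seq braid_letter) : Type :=
  ('I_(size w).+1 * 'I_n)%type.

Definition letter_at (w : seq braid_letter) (t : nat) : braid_letter :=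
  nth (0, true) w t.

Inductive strand_cont (n : nat) (w : seq braid_letter) :
    segment n w -> segment n w -> Prop :=
| sc_straight (t : nat) (j : 'I_n) : t < size w ->
    val j != (letter_at w t).1 -> val j != (letter_at w t).1.+1 ->
    strand_cont (inord t, j) (inord t.+1, j)
| sc_over_pos (t : nat) (j j' : 'I_n) : t < size w ->
    (letter_at w t).2 = true ->
    val j = (letter_at w t).1 -> val j' = (letter_at w t).1.+1 ->
    strand_cont (inord t, j') (inord t.+1, j)
| sc_over_neg (t : nat) (j j' : 'I_n) : t < size w ->
    (letter_at w t).2 = false ->
    val j = (letter_at w t).1 -> val j' = (letter_at w t).1.+1 ->
    strand_cont (inord t, j) (inord t.+1, j')
| sc_close (j : 'I_n) : strand_cont (ord_max, j) (ord0, j).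

Definition arc (n : nat) (w : seq braid_letter) : Type :=
  cquot (eqclos (@strand_cont n w)).

Definition arc_of (n : nat) (w : seq braid_letter) (s : segment n w) : arc n w :=
  cclass (eqclos (@strand_cont n w)) s.

(** Crossing relations of D_C: z = x |>_j y (positive), z = x |>^{-1}_j y
    (negative), y over-arc of colour j, x incoming and z outgoing under-arc. *)
Inductive crossing_rel (k n : nat) (v : 'I_n -> 'I_k) (w : seq braid_letter) :
    kterm k (arc n w) -> kterm k (arc n w) -> Prop :=
| cr_pos (t : nat) (j j' : 'I_n) : t < size w ->
    (letter_at w t).2 = true ->
    val j = (letter_at w t).1 -> val j' = (letter_at w t).1.+1 ->
    crossing_rel v
      (KGen (arc_of (inord t.+1, j')))
      (KOp (colors_at v w t j') (KGen (arc_of (inord t, j)))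
                                (KGen (arc_of (inord t, j'))))
| cr_neg (t : nat) (j j' : 'I_n) : t < size w ->
    (letter_at w t).2 = false ->
    val j = (letter_at w t).1 -> val j' = (letter_at w t).1.+1 ->
    crossing_rel v
      (KGen (arc_of (inord t.+1, j)))
      (KOpInv (colors_at v w t j) (KGen (arc_of (inord t, j')))
                                  (KGen (arc_of (inord t, j)))).

Definition fund_kquandle (k n : nat) (v : 'I_n -> 'I_k) (w : seq braid_letter)
  : Type := kpres (@crossing_rel k n v w).

Definition fund_op (k n : nat) (v : 'I_n -> 'I_k) (w : seq braid_letter) :
  'I_k -> fund_kquandle v w -> fund_kquandle v w -> fund_kquandle v w :=
  @kpres_op k (arc n w) (@crossing_rel k n v w).

Definition top_arc (k n : nat) (v : 'I_n -> 'I_k) (w : seq braid_letter)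
    (j : 'I_n) : fund_kquandle v w :=
  kpres_gen (@crossing_rel k n v w) (arc_of ((ord0 : 'I_(size w).+1), j)).

Definition fund_hom_space (k : nat) (Q : topologicalType)
    (op : 'I_k -> Q -> Q -> Q) (n : nat) (v : 'I_n -> 'I_k)
    (w : seq braid_letter)
  : set {compact-open, discrete_topology (fund_kquandle v w) -> Q} :=
  [set f | is_khom (@fund_op k n v w) op f].

Definition homeomorphism_on (X Y : topologicalType) (A : set X) (B : set Y)
    (f : X -> Y) : Prop :=
  [/\ set_bij A B f, {within A, continuous f} &
      exists g : Y -> X, {within B, continuous g} /\
        (forall y, B y -> A (g y) /\ f (g y) = y)].

From Pilot Require Import Defs.
From HB Require Import structures.
From mathcomp Require Import all_boot all_order.
From mathcomp Require Import boolp classical_sets functions.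
From mathcomp Require Import topology.

Set Implicit Arguments.
Unset Strict Implicit.
Unset Printing Implicit Defensive.

Local Open Scope classical_set_scope.

(* A homomorphism F(D_C) -> Q is the same thing as a Q-colouring of the arcs
   of D_C respecting the crossing relations.  Reading a colouring level by
   level down the braid, each crossing forces the colours below it to be the
   image of the colours above under the elementary braid map, so the whole
   colouring is determined by the colours x of the top arcs, and the closure
   arcs force x to be a fixed point of the braid map.  Conversely, a fixed
   point x colours every segment consistently, giving the inverse map.  Both
   maps are continuous: evaluation at a point is continuous for the
   compact-open topology, and since F(D_C) is discrete the inverse is the
   curry of a map that is continuous in x for each fixed element. *)

Section ClassicalQuotient.
Variables (T : Type) (E : T -> T -> Prop).

Lemma cquot_inj (A B : cquot E) : proj1_sig A = proj1_sig B -> A = B.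
Proof.
case: A B => [A pA] [B pB] /= eAB; subst B.
by congr exist; exact: Prop_irrelevance.
Qed.

Lemma creprK : cancel (@crepr T E) (cclass E).
Proof. by move=> A; apply: cquot_inj; rewrite /crepr; case: cid. Qed.

Lemma crepr_cclass : (forall a, E a a) -> forall a, E a (crepr (cclass E a)).
Proof. by move=> Erefl a; rewrite /crepr; case: cid => b /= ->. Qed.

Lemma eq_cclass :
    (forall a b, E a b -> E b a) -> (forall a b c, E a b -> E b c -> E a c) ->
  forall a b, E a b -> cclass E a = cclass E b.
Proof.
move=> Esym Etrans a b Eab; apply: cquot_inj => /=.
apply/funext => c; apply/propext; split; first exact: Etrans (Esym _ _ Eab).
exact: Etrans Eab.
Qed.

End ClassicalQuotient.

Section Presentation.
Variables (k : nat) (Q : Type) (op opinv : 'I_k -> Q -> Q -> Q).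
Hypothesis HQ : is_kquandle op opinv.
Variables (G : Type) (R : kterm k G -> kterm k G -> Prop).

Fixpoint keval (gv : G -> Q) (t : kterm k G) : Q :=
  match t with
  | KGen g => gv g
  | KOp i a b => op i (keval gv a) (keval gv b)
  | KOpInv i a b => opinv i (keval gv a) (keval gv b)
  end.

Definition satisfies_rels (gv : G -> Q) : Prop :=
  forall a b, R a b -> keval gv a = keval gv b.

Lemma keval_kcong gv : satisfies_rels gv ->
  forall a b, kcong R a b -> keval gv a = keval gv b.
Proof.
case: HQ => idem opK opVK dist gvR a b; elim=> /= {a b}.
- exact: gvR.
- by [].
- by move=> a b _ ->.
- by move=> a b c _ -> _ ->.
- by move=> i a a' b b' _ -> _ ->.
- by move=> i a a' b b' _ -> _ ->.
- by move=> i a; rewrite idem.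
- by move=> i a b; rewrite opK.
- by move=> i a b; rewrite opVK.
- by move=> i j a b c; rewrite dist.
Qed.

Local Notation kclass := (cclass (kcong R)).

Lemma kcong_crepr a : kcong R a (crepr (kclass a)).
Proof. exact: (crepr_cclass (@kc_refl _ _ R)). Qed.

Lemma eq_kclass a b : kcong R a b -> kclass a = kclass b.
Proof. exact: (eq_cclass (@kc_sym _ _ R) (@kc_trans _ _ R)). Qed.

Lemma kclass_op i a b : kclass (KOp i a b) = kpres_op i (kclass a) (kclass b).
Proof. by apply: eq_kclass; apply: kc_op; exact: kcong_crepr. Qed.

Definition kpres_lift (gv : G -> Q) (a : kpres R) : Q := keval gv (crepr a).

Section Lift.
Variable gv : G -> Q.
Hypothesis gvR : satisfies_rels gv.

Lemma kpres_lift_class t : kpres_lift gv (kclass t) = keval gv t.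
Proof. by apply/esym/(keval_kcong gvR); exact: kcong_crepr. Qed.

Lemma kpres_lift_hom : is_khom (@kpres_op k G R) op (kpres_lift gv).
Proof. by move=> i a b; rewrite /kpres_op kpres_lift_class. Qed.

Lemma kpres_lift_gen g : kpres_lift gv (kpres_gen R g) = gv g.
Proof. exact: kpres_lift_class. Qed.

End Lift.

Section Hom.
Variable f : kpres R -> Q.
Hypothesis fhom : is_khom (@kpres_op k G R) op f.

Lemma khom_class t : f (kclass t) = keval (f \o kpres_gen R) t.
Proof.
case: HQ => _ opK _ _.
elim: t => [g|i a IHa b IHb|i a IHa b IHb] //=; first by rewrite kclass_op fhom IHa IHb.
have opVK : kpres_op i (kclass (KOpInv i a b)) (kclass b) = kclass a.
  by rewrite -kclass_op; apply: eq_kclass; exact: kc_inv2.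
by rewrite -IHa -IHb -opVK fhom opK.
Qed.

Lemma khom_satisfies_rels : satisfies_rels (f \o kpres_gen R).
Proof.
by move=> a b Rab; rewrite -!khom_class; congr f; apply: eq_kclass; exact: kc_rel.
Qed.

Lemma khom_lift : f = kpres_lift (f \o kpres_gen R).
Proof.
apply/funext => a; rewrite -[in LHS](creprK a) khom_class.
by rewrite -kpres_lift_class ?creprK //; exact: khom_satisfies_rels.
Qed.

End Hom.
End Presentation.

Lemma insubd_ordE (n : nat) (j j' : 'I_n) (m : nat) : val j' = m -> insubd j m = j'.
Proof. by move=> <-; apply: val_inj; rewrite val_insubd ltn_ord. Qed.

Section BraidMap.
Variables (k : nat) (Q : Type) (op opinv : 'I_k -> Q -> Q -> Q).
Variables (n : nat) (v : 'I_n -> 'I_k) (w : seq braid_letter).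

Lemma braid_map_rcons (c : 'I_n -> 'I_k) (u : seq braid_letter) l x :
  braid_map op opinv c (rcons u l) x =
  braid_step op opinv (foldl (fun c l => swapc l.1 c) c u) l (braid_map op opinv c u x).
Proof. by elim: u c x => [|l0 u IH] c x //=. Qed.

Lemma braid_map_take_succ t x : t < size w ->
  braid_map op opinv v (take t.+1 w) x =
  braid_step op opinv (colors_at v w t) (letter_at w t)
    (braid_map op opinv v (take t w) x).
Proof. by move=> ltw; rewrite (take_nth (0, true) ltw) braid_map_rcons. Qed.

Definition segval (x : 'I_n -> Q) (s : segment n w) : Q :=
  braid_map op opinv v (take s.1 w) x s.2.

Lemma segval_inord x t j : t <= size w ->
  segval x (inord t, j) = braid_map op opinv v (take t w) x j.
Proof. by move=> lew; rewrite /segval /= inordK. Qed.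

Lemma segval_succ x t j : t < size w ->
  segval x (inord t.+1, j) =
  braid_step op opinv (colors_at v w t) (letter_at w t)
    (braid_map op opinv v (take t w) x) j.
Proof. by move=> ltw; rewrite segval_inord // braid_map_take_succ. Qed.

Lemma segval_strand_cont x : braid_map op opinv v w x = x ->
  forall s1 s2, strand_cont s1 s2 -> segval x s1 = segval x s2.
Proof.
move=> fix_x s1 s2 [t j ltw nji nji1|t j j' ltw sg ji ji1|t j j' ltw sg ji ji1|j];
  rewrite ?segval_succ ?(segval_inord x _ (ltnW ltw)) // /braid_step.
- by rewrite (negbTE nji) (negbTE nji1) if_same.
- by rewrite sg ji eqxx (insubd_ordE j ji1).
- by rewrite sg ji1 -ji (gtn_eqF (ltnSn _)) eqxx (insubd_ordE j' (erefl (val j))).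
- by rewrite /segval /= take_size fix_x take0.
Qed.

End BraidMap.

Section Colorings.
Variables (k : nat) (Q : Type) (op opinv : 'I_k -> Q -> Q -> Q).
Variables (n : nat) (v : 'I_n -> 'I_k) (w : seq braid_letter).
Hypothesis Hw : valid_word n w.

Local Notation diagram_arc := (Defs.arc n w).
Local Notation is_coloring :=
  (satisfies_rels op opinv (@crossing_rel k n v w)).

Lemma letter_at_valid t : t < size w -> (letter_at w t).1.+1 < n.
Proof. by move=> ltw; exact: (allP Hw) _ (mem_nth (0, true) ltw). Qed.

Lemma arc_of_cont (s1 s2 : segment n w) : strand_cont s1 s2 -> arc_of s1 = arc_of s2.
Proof.
move=> s12; apply: (eq_cclass (@eqclos_sym _ _) (@eqclos_trans _ _)).
exact: eqclos_step.
Qed.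

Definition top_colors (c : diagram_arc -> Q) (j : 'I_n) : Q :=
  c (arc_of ((ord0 : 'I_(size w).+1), j)).

Definition arcval (x : 'I_n -> Q) (a : diagram_arc) : Q :=
  segval op opinv v x (crepr a).

Section ColoringToFixedPoint.
Variable c : diagram_arc -> Q.
Hypothesis c_col : is_coloring c.

Lemma coloring_step t j : t < size w ->
  c (arc_of (inord t.+1, j)) =
  braid_step op opinv (colors_at v w t) (letter_at w t)
    (fun j => c (arc_of (inord t, j))) j.
Proof.
move=> ltw; have lt_n := letter_at_valid ltw.
pose i : 'I_n := Ordinal (ltnW lt_n); pose i1 : 'I_n := Ordinal lt_n.
have vi : val i = (letter_at w t).1 by [].
have vi1 : val i1 = (letter_at w t).1.+1 by [].
rewrite /braid_step; case sg: (letter_at w t).2.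
- have [ji|nji] := eqVneq (val j) (letter_at w t).1.
    by rewrite -(arc_of_cont (sc_over_pos ltw sg ji vi1)) (insubd_ordE j vi1).
  have [ji1|nji1] := eqVneq (val j) (letter_at w t).1.+1.
    have := c_col (cr_pos v ltw sg vi ji1); cbn [keval] => ->.
    by rewrite (insubd_ordE j vi).
  by rewrite (arc_of_cont (sc_straight ltw nji nji1)).
- have [ji|nji] := eqVneq (val j) (letter_at w t).1.
    have := c_col (cr_neg v ltw sg ji vi1); cbn [keval] => ->.
    by rewrite (insubd_ordE j vi1).
  have [ji1|nji1] := eqVneq (val j) (letter_at w t).1.+1.
    by rewrite -(arc_of_cont (sc_over_neg ltw sg vi ji1)) (insubd_ordE j vi).
  by rewrite (arc_of_cont (sc_straight ltw nji nji1)).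
Qed.

Lemma coloring_level t j : t <= size w ->
  c (arc_of (inord t, j)) = braid_map op opinv v (take t w) (top_colors c) j.
Proof.
elim: t j => [|t IH] j lew.
  rewrite take0 /top_colors; congr (c (arc_of (_, j))).
  by apply: val_inj; rewrite /= inordK.
rewrite coloring_step // braid_map_take_succ //; congr braid_step.
by apply/funext => j'; rewrite IH // ltnW.
Qed.

Lemma coloring_segval s : c (arc_of s) = segval op opinv v (top_colors c) s.
Proof.
case: s => t j; have le_t : val t <= size w by rewrite -ltnS ltn_ord.
by rewrite -(inord_val t) coloring_level // /segval /= inordK.
Qed.

Lemma coloring_fixed : braid_map op opinv v w (top_colors c) = top_colors c.
Proof.
apply/funext => j; have := coloring_level j (leqnn (size w)).
rewrite take_size => <-; rewrite /top_colors -(arc_of_cont (sc_close w j)).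
by congr (c (arc_of (_, j))); apply: val_inj; rewrite /= inordK.
Qed.

Lemma coloring_arcval : c = arcval (top_colors c).
Proof. by apply/funext => a; rewrite /arcval -coloring_segval /arc_of creprK. Qed.

End ColoringToFixedPoint.

Section FixedPointToColoring.
Variable x : 'I_n -> Q.
Hypothesis fix_x : braid_map op opinv v w x = x.

Lemma arcval_of s : arcval x (arc_of s) = segval op opinv v x s.
Proof.
have segval_eqclos s1 s2 : eqclos (@strand_cont n w) s1 s2 ->
    segval op opinv v x s1 = segval op opinv v x s2.
  by elim=> [? ? /(segval_strand_cont fix_x)|a|a b _ ->|a b c _ -> _ ->].
apply/esym/segval_eqclos; exact: (crepr_cclass (@eqclos_refl _ _)).
Qed.

Lemma arcval_coloring : is_coloring (arcval x).
Proof.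
move=> a b [t j j' ltw sg ji ji1|t j j' ltw sg ji ji1]; cbn [keval];
  rewrite !arcval_of segval_succ // !(segval_inord op opinv v x _ (ltnW ltw));
  rewrite /braid_step sg.
- by rewrite ji1 -ji (gtn_eqF (ltnSn _)) eqxx (insubd_ordE j' (erefl (val j))).
- by rewrite ifT ?(insubd_ordE j ji1) // ji.
Qed.

Lemma top_colors_arcval : top_colors (arcval x) = x.
Proof. by apply/funext => j; rewrite /top_colors arcval_of /segval /= take0. Qed.

End FixedPointToColoring.
End Colorings.

Section HomFixedPoint.
Variables (k : nat) (Q : Type) (op opinv : 'I_k -> Q -> Q -> Q).
Hypothesis HQ : is_kquandle op opinv.
Variables (n : nat) (v : 'I_n -> 'I_k) (w : seq braid_letter).
Hypothesis Hw : valid_word n w.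

Local Notation is_fund_hom := (is_khom (@fund_op k n v w) op).
Local Notation gen := (kpres_gen (@crossing_rel k n v w)).

Definition fund_hom_of_fixed (x : 'I_n -> Q) : fund_kquandle v w -> Q :=
  kpres_lift op opinv (arcval op opinv v x).

Lemma fund_hom_top_fixed f : is_fund_hom f ->
  braid_map op opinv v w (top_colors (f \o gen)) = top_colors (f \o gen).
Proof. by move=> fhom; have := coloring_fixed Hw (khom_satisfies_rels HQ fhom). Qed.

Lemma fund_hom_of_top f : is_fund_hom f ->
  f = fund_hom_of_fixed (top_colors (f \o gen)).
Proof.
move=> fhom; rewrite [LHS](khom_lift HQ fhom) /fund_hom_of_fixed.
by rewrite -(coloring_arcval Hw (khom_satisfies_rels HQ fhom)).
Qed.

Section OfFixed.
Variable x : 'I_n -> Q.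
Hypothesis fix_x : braid_map op opinv v w x = x.

Lemma fund_hom_of_fixed_hom : is_fund_hom (fund_hom_of_fixed x).
Proof. exact: (kpres_lift_hom HQ (arcval_coloring fix_x)). Qed.

Lemma top_fund_hom_of_fixed : top_colors (fund_hom_of_fixed x \o gen) = x.
Proof.
rewrite -[RHS](top_colors_arcval fix_x); apply/funext => j.
exact: (kpres_lift_gen HQ (arcval_coloring fix_x)).
Qed.

End OfFixed.
End HomFixedPoint.

Lemma continuous_ptws (X : topologicalType) (I : Type) (T : topologicalType)
    (h : X -> {ptws I -> T}) :
  (forall i, continuous (fun x => h x i)) -> continuous h.
Proof.
move=> hc x; apply/cvg_sup => i U [_ /= [[W oW <-]]] /= Whx /filterS; apply.
by apply: (hc i); exact: open_nbhs_nbhs.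
Qed.

Lemma continuous_eval_compact_open (X Y : topologicalType) (a : X) :
  continuous (fun f : {compact-open, X -> Y} => f a).
Proof.
move=> f U; rewrite /= nbhsE => -[O [oO Ofa] OU].
apply: (@filterS _ _ _ [set g : {compact-open, X -> Y} | g @` [set a] `<=` O]).
  by move=> g /= gO; apply/OU/gO; exists a.
apply: open_nbhs_nbhs; split.
  by apply: compact_open_open => //; exact: compact_set1.
by move=> _ [b -> <-].
Qed.

(* Since D is discrete, joint continuity on X * D reduces to continuity in x. *)
Lemma continuous_discrete_compact_open (X : topologicalType) (D : choiceType)
    (Y : topologicalType) (h : X -> D -> Y) :
  (forall d, continuous (h^~ d)) ->
  continuous (h : X -> {compact-open, discrete_topology D -> Y}).
Proof.
move=> hc.
apply: (@continuous_curry_fun _ _ _ (fun p : X * discrete_topology D => h p.1 p.2)).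
case=> x d U /= hU; exists ((h^~ d) @^-1` U, [set d]); first split.
- exact: hc.
- exact: discrete_set1.
- by case=> y e /= [hyU ->].
Qed.

Lemma continuous_comp2 (X Y : topologicalType) (h : Y -> Y -> Y) (f g : X -> Y) :
  continuous (fun p : Y * Y => h p.1 p.2) -> continuous f -> continuous g ->
  continuous (fun x => h (f x) (g x)).
Proof. by move=> hc fc gc x; exact: (continuous2_cvg _ (hc _) (fc x) (gc x)). Qed.

Section ContinuousBraid.
Variables (k : nat) (Q : topologicalType) (op opinv : 'I_k -> Q -> Q -> Q).
Hypothesis op_cont : forall i, continuous (fun p : Q * Q => op i p.1 p.2).
Hypothesis opinv_cont : forall i, continuous (fun p : Q * Q => opinv i p.1 p.2).

Lemma keval_continuous (X : topologicalType) (G : Type) (gv : X -> G -> Q) :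
  (forall g, continuous (gv^~ g)) ->
  forall t, continuous (fun x => keval op opinv (gv x) t).
Proof.
move=> gv_cont; elim=> [g|i a IHa b IHb|i a IHa b IHb] //=.
- exact: continuous_comp2.
- exact: continuous_comp2.
Qed.

Variables (n : nat) (v : 'I_n -> 'I_k) (w : seq braid_letter).
Local Notation Y := {ptws 'I_n -> Q}.

Lemma braid_step_continuous c l :
  continuous (fun y : Y => braid_step op opinv c l y : Y).
Proof.
have proj_cont (j : 'I_n) : continuous (fun y : Y => y j) by exact: proj_continuous.
apply: continuous_ptws => j; rewrite /braid_step.
by case: l.2; case: (val j == l.1); case: (val j == l.1.+1);
  first [exact: proj_cont | exact: continuous_comp2].
Qed.

Lemma braid_map_continuous c u :
  continuous (fun y : Y => braid_map op opinv c u y : Y).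
Proof.
elim: u c => [|l u IH] c y /=; first exact: cvg_id.
apply: (@continuous_comp _ _ _ (fun y : Y => braid_step op opinv c l y : Y)
  (fun y : Y => braid_map op opinv (swapc l.1 c) u y : Y)).
- exact: braid_step_continuous.
- exact: IH.
Qed.

Lemma arcval_continuous (a : Defs.arc n w) :
  continuous (fun y : Y => arcval op opinv v y a).
Proof.
move=> y; apply: (@continuous_comp _ _ _
  (fun y : Y => braid_map op opinv v (take (crepr a).1 w) y : Y)
  (fun z : Y => z (crepr a).2)).
- exact: braid_map_continuous.
- exact: proj_continuous.
Qed.

End ContinuousBraid.

Theorem mainTheorem5 (k : nat) (Q : topologicalType)
    (op opinv : 'I_k -> Q -> Q -> Q)
    (HQ : is_topological_kquandle op opinv)
    (n : nat) (v : 'I_n -> 'I_k) (w : seq braid_letter)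
    (Hw : valid_word n w)
    (Hcol : forall c : 'I_k, exists j : 'I_n, v j = c)
    (Hclosed : forall j : 'I_n, colors_at v w (size w) j = v j) :
  @homeomorphism_on _ {ptws 'I_n -> Q}
    (@fund_hom_space k Q op n v w)
    (@fixed_points k Q op opinv n v w)
    (fun f j => f (@top_arc k n v w j)).
Proof.
(* Hcol and Hclosed only make the closure a k-coloured link. *)
case: HQ => HQ /all_and2 [op_cont opinv_cont].
have inverse_spec x : @fixed_points k Q op opinv n v w x ->
    @fund_hom_space k Q op n v w (@fund_hom_of_fixed k Q op opinv n v w x) /\
    (fun j => @fund_hom_of_fixed k Q op opinv n v w x (top_arc v w j)) = x.
  by move=> fix_x; split; [exact: fund_hom_of_fixed_hom | exact: top_fund_hom_of_fixed].
split; first split.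
- by move=> f fhom; exact: fund_hom_top_fixed.
- move=> f1 f2 /set_mem f1hom /set_mem f2hom top12.
  rewrite (fund_hom_of_top HQ Hw f1hom) (fund_hom_of_top HQ Hw f2hom).
  by rewrite [top_colors _]top12.
- move=> x /inverse_spec [fhom top_f].
  by exists (@fund_hom_of_fixed k Q op opinv n v w x).
- apply/continuous_subspaceT/continuous_ptws => j.
  exact: continuous_eval_compact_open.
- exists (@fund_hom_of_fixed k Q op opinv n v w); split; last exact: inverse_spec.
  apply/continuous_subspaceT/continuous_discrete_compact_open => a.
  by apply: keval_continuous => // b; exact: arcval_continuous.
Qed.
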